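(* Let $K$ be a field of characteristic $\neq2$ and $\tau=(-1,-1,-1,-1)$. Then $\mathrm{Aut}\,A_\tau=G_{\mathrm{odd}}$, the group of all odd automorphisms of $K\langle x_1,x_2\rangle$.
   Context: $A=K\langle x_1,x_2\rangle$ is the free associative algebra with unit on $x_1,x_2$; $\varphi=(f_1,f_2)$ denotes the algebra endomorphism with $\varphi(x_1)=f_1$, $\varphi(x_2)=f_2$. Let $A=B_0\oplus B_1$, where $B_0$ (resp. $B_1$) is the linear span of all words of even (resp. odd) length. An automorphism $\varphi=(f_1,f_2)$ of $A$ is odd if $f_1,f_2\in B_1$; these form a group $G_{\mathrm{odd}}$. For $q_{ij}\in K$, the diagonal braiding $\tau=(q_{11},q_{12},q_{21},q_{22})$ on $A$ is the linear map $A\otimes A\to A\otimes A$ given on words $u,v$ by $(u\otimes v)\tau=q_{11}^{s_1t_1}q_{12}^{s_1t_2}q_{21}^{s_2t_1}q_{22}^{s_2t_2}\,(v\otimes u)$, where $s_i$ (resp. $t_i$) is the number of occurrences of $x_i$ in $u$ (resp. $v$). $A_\tau$ is $A$ equipped with $\tau$, and $\mathrm{Aut}\,A_\tau$ is the group of algebra automorphisms $\varphi$ of $A$ satisfying $(\varphi\otimes\varphi)((w)\tau)=((\varphi\otimes\varphi)(w))\tau$ for all $w\in A\otimes A$, viewed as a subgroup of $\mathrm{Aut}\,K\langle x_1,x_2\rangle$. *)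

(* The free associative algebra K<x_1,x_2> is modelled by
   formal finite linear combinations of words, compared coefficientwise. *)
From HB Require Import structures.
From mathcomp Require Import all_boot all_order all_algebra.
Set Implicit Arguments. Unset Strict Implicit. Unset Printing Implicit Defensive.
Import GRing.Theory.
Local Open Scope ring_scope.

(* words in the letters x_0, x_1 (x_1, x_2 of the paper) *)
Definition word := seq 'I_2.

Section FreeAlg.
Variable K : fieldType.

Definition fpoly := seq (K * word).
Definition coef (p : fpoly) (w : word) : K := \sum_(t <- p | t.2 == w) t.1.
Definition peq (p q : fpoly) : Prop := forall w, coef p w = coef q w.

Definition pX (i : 'I_2) : fpoly := [:: (1, [:: i])].
Definition pone : fpoly := [:: (1, [::])].
Definition pmul (p q : fpoly) : fpoly :=
  [seq (t.1 * s.1, t.2 ++ s.2) | t <- p, s <- q].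
Definition pscale (a : K) (p : fpoly) : fpoly := [seq (a * t.1, t.2) | t <- p].
Definition pprod (ps : seq fpoly) : fpoly := foldr pmul pone ps.

(* the algebra endomorphism phi = (f 0, f 1), i.e. x_i |-> f i, applied to p *)
Definition subst (f : 'I_2 -> fpoly) (p : fpoly) : fpoly :=
  flatten [seq pscale t.1 (pprod (map f t.2)) | t <- p].

Definition is_aut (f : 'I_2 -> fpoly) : Prop :=
  exists g : 'I_2 -> fpoly,
    (forall i, peq (subst f (g i)) (pX i)) /\ (forall i, peq (subst g (f i)) (pX i)).

Definition odd_endo (f : 'I_2 -> fpoly) : Prop :=
  forall i w, coef (f i) w != 0 -> odd (size w).

(* A (x) A, as formal sums of (coefficient, (u, v)) meaning coef * u (x) v *)
Definition tens := seq (K * (word * word)).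
Definition tcoef (t : tens) (uv : word * word) : K := \sum_(s <- t | s.2 == uv) s.1.
Definition teq (t t' : tens) : Prop := forall uv, tcoef t uv = tcoef t' uv.

(* diagonal braiding coefficient q_11^{s1 t1} q_12^{s1 t2} q_21^{s2 t1} q_22^{s2 t2} *)
Definition braid_coef (q : 'I_2 -> 'I_2 -> K) (u v : word) : K :=
  \prod_(i < 2) \prod_(j < 2) q i j ^+ (count_mem i u * count_mem j v).

Definition tau (q : 'I_2 -> 'I_2 -> K) (t : tens) : tens :=
  [seq (braid_coef q s.2.1 s.2.2 * s.1, (s.2.2, s.2.1)) | s <- t].

Definition ptens (p r : fpoly) : tens := [seq (b.1 * c.1, (b.2, c.2)) | b <- p, c <- r].

Definition tmap (f : 'I_2 -> fpoly) (t : tens) : tens :=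
  flatten [seq [seq (s.1 * c.1, c.2)
               | c <- ptens (subst f [:: (1, s.2.1)]) (subst f [:: (1, s.2.2)])]
          | s <- t].

Definition braided (q : 'I_2 -> 'I_2 -> K) (f : 'I_2 -> fpoly) : Prop :=
  forall t : tens, teq (tmap f (tau q t)) (tau q (tmap f t)).

Definition in_Aut_tau (q : 'I_2 -> 'I_2 -> K) (f : 'I_2 -> fpoly) : Prop :=
  is_aut f /\ braided q f.

Definition in_G_odd (f : 'I_2 -> fpoly) : Prop := is_aut f /\ odd_endo f.

End FreeAlg.

From mathcomp Require Import all_boot all_order all_algebra.
Set Implicit Arguments. Unset Strict Implicit. Unset Printing Implicit Defensive.
Import GRing.Theory.
Local Open Scope ring_scope.

(* For tau = (-1,-1,-1,-1) the braiding coefficient of two words u, v is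
   (-1)^(|u| |v|), since the four exponents add up to |u| |v|.  Testing the
   braiding condition on x_i (x) x_i at the coefficient of w (x) w, for a word w
   occurring in phi(x_i) with coefficient c, gives -c^2 = (-1)^(|w|^2) c^2; as
   c != 0 and -1 != 1 (char K <> 2), |w| must be odd: braided automorphisms are
   odd.  Conversely, if phi is odd then the image of a word u is a combination
   of words of length = |u| mod 2 (products multiply parities), so in
   (phi (x) phi)(u (x) v) the sign (-1)^(|u| |v|) equals (-1)^(|x| |y|) at
   every nonzero coefficient x (x) y, and phi commutes with tau. *)

Lemma split_at_cat (T : eqType) (V : nmodType) (a b w : seq T) (x : V) :
  \sum_(k < (size w).+1) (if (take k w == a) && (drop k w == b) then x else 0)
  = if a ++ b == w then x else 0.
Proof.
have split_eq (k : nat) : (take k w == a) && (drop k w == b) -> a ++ b = w.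
  by case/andP => /eqP <- /eqP <-; rewrite cat_take_drop.
case: eqP => [ew | new]; last first.
  by apply: big1 => k _; case: ifP => // /split_eq.
have lt_a : (size a < (size w).+1)%N by rewrite -ew size_cat ltnS leq_addr.
rewrite (bigD1 (Ordinal lt_a)) //= -{1 2}ew take_size_cat // drop_size_cat //.
rewrite !eqxx /= big1 ?addr0 // => k neq_k; case: ifP => // /andP [/eqP ta _].
case/eqP: neq_k; apply: val_inj => /=.
by rewrite -ta size_take_min; apply/esym/minn_idPl; rewrite -ltnS.
Qed.

Lemma sum_count_mem (T : finType) (s : seq T) :
  (\sum_(i : T) count_mem i s)%N = size s.
Proof.
elim: s => [|x s IH] /=; first by rewrite big1.
rewrite big_split /= IH (bigD1 x) //= eqxx big1 ?add1n // => i.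
by rewrite eq_sym => /negbTE ->.
Qed.

Lemma braid_coef_const (K : fieldType) (c : K) (u v : word) :
  braid_coef (fun _ _ => c) u v = c ^+ (size u * size v).
Proof.
rewrite /braid_coef /= -(sum_count_mem u) -(sum_count_mem v).
under eq_bigr => i _ do rewrite prodrXr -big_distrr.
by rewrite prodrXr -big_distrl.
Qed.

Section Coefficients.
Variable K : fieldType.

Lemma coefE (p : fpoly K) w :
  coef p w = \sum_(t <- p) (if t.2 == w then t.1 else 0).
Proof. by rewrite /coef big_mkcond. Qed.

Lemma coef_pone (w : word) : coef (pone K) w = ([::] == w)%:R.
Proof. by rewrite /coef big_cons big_nil addr0 /=; case: eqP. Qed.

Lemma coef_pscale (a : K) (p : fpoly K) w : coef (pscale a p) w = a * coef p w.
Proof.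
rewrite !coefE /pscale big_map mulr_sumr; apply: eq_bigr => t _ /=.
by case: ifP; rewrite ?mulr0.
Qed.

Lemma coef_pmul (p q : fpoly K) w :
  coef (pmul p q) w =
  \sum_(k < (size w).+1) coef p (take k w) * coef q (drop k w).
Proof.
symmetry; under eq_bigr => k _ do rewrite !coefE big_distrl /=.
rewrite exchange_big coefE /pmul big_allpairs_dep /=; apply: eq_bigr => t _.
under eq_bigr => k _ do rewrite big_distrr /=.
rewrite exchange_big /=; apply: eq_bigr => s _.
rewrite -split_at_cat; apply: eq_bigr => k _.
rewrite ![take k w == _]eq_sym ![drop k w == _]eq_sym.
by do 2!case: eqP; rewrite ?mulr0 ?mul0r.
Qed.

Lemma coef_pmul_pone (p : fpoly K) w : coef (pmul p (pone K)) w = coef p w.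
Proof.
rewrite coef_pmul big_ord_recr /= take_size drop_size coef_pone mulr1.
rewrite big1 ?add0r // => k _; rewrite coef_pone eq_sym -size_eq0 size_drop.
by rewrite subn_eq0 leqNgt ltn_ord mulr0.
Qed.

Lemma coef_subst_word (f : 'I_2 -> fpoly K) (u w : word) :
  coef (subst f [:: (1, u)]) w = coef (pprod (map f u)) w.
Proof. by rewrite /subst /= cats0 coef_pscale mul1r. Qed.

Definition of_parity (p : fpoly K) (e : bool) : Prop :=
  forall w, coef p w != 0 -> odd (size w) = e.

Lemma of_parity_pone : of_parity (pone K) false.
Proof. by move=> w; rewrite coef_pone; case: ([::] =P w) => [<-|_]; rewrite ?eqxx. Qed.

Lemma of_parity_pmul (p q : fpoly K) e1 e2 :
  of_parity p e1 -> of_parity q e2 -> of_parity (pmul p q) (e1 (+) e2).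
Proof.
move=> Hp Hq w; rewrite coef_pmul => nz_pq.
have /hasP [k _] :
    has (fun k : 'I_(size w).+1 => coef p (take k w) * coef q (drop k w) != 0)
        (index_enum _).
  apply: contraNT nz_pq => /hasPn nz_term; rewrite big1 // => k _.
  by apply/eqP/negbNE/nz_term; apply: mem_index_enum.
rewrite mulf_eq0 negb_or => /andP [/Hp <- /Hq <-].
by rewrite -{1}(cat_take_drop k w) size_cat oddD.
Qed.

Lemma of_parity_word_image (f : 'I_2 -> fpoly K) (u : word) :
  odd_endo f -> of_parity (pprod (map f u)) (odd (size u)).
Proof.
move=> odd_f; elim: u => [|i u IH] /=; first exact: of_parity_pone.
by rewrite -addTb; apply: of_parity_pmul => // w /odd_f.
Qed.

Lemma tcoef_tau (q : 'I_2 -> 'I_2 -> K) (t : tens K) x y :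
  tcoef (tau q t) (x, y) = braid_coef q y x * tcoef t (y, x).
Proof.
rewrite /tcoef /tau big_map mulr_sumr big_mkcond [RHS]big_mkcond.
apply: eq_bigr => -[a [u v]] _ /=; rewrite !xpair_eqE.
by case: (v =P x) => [->|]; case: (u =P y) => [->|]; rewrite ?mulr0.
Qed.

Lemma tcoef_ptens (p r : fpoly K) x y :
  tcoef (ptens p r) (x, y) = coef p x * coef r y.
Proof.
rewrite /tcoef /ptens big_mkcond big_allpairs_dep !coefE big_distrl /=.
apply: eq_bigr => b _; rewrite big_distrr /=; apply: eq_bigr => c _.
by rewrite xpair_eqE; case: (b.2 == x); case: (c.2 == y); rewrite ?mulr0 ?mul0r.
Qed.

Lemma tcoef_tmap (f : 'I_2 -> fpoly K) (t : tens K) x y :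
  tcoef (tmap f t) (x, y) =
  \sum_(s <- t) s.1 * (coef (pprod (map f s.2.1)) x * coef (pprod (map f s.2.2)) y).
Proof.
rewrite /tcoef /tmap big_mkcond big_flatten big_map; apply: eq_bigr => s _.
rewrite -!coef_subst_word -tcoef_ptens /tcoef big_map mulr_sumr [RHS]big_mkcond.
by apply: eq_bigr => c _ /=; case: ifP; rewrite ?mulr0.
Qed.

End Coefficients.

(* The only use of the characteristic: -1 = 1 would give 2 = 0. *)
Lemma neg1_neq1 (K : fieldType) : (2 \notin [pchar K])%N -> (-1 : K) != 1.
Proof.
move=> hK; apply: contra hK => /eqP neg1E; rewrite inE /=.
by rewrite mulr2n -{1}neg1E addNr.
Qed.

(* Aut A_tau is contained in G_odd: test the braiding on x_i (x) x_i. *)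
Lemma braided_sign_odd (K : fieldType) (f : 'I_2 -> fpoly K) :
  (2 \notin [pchar K])%N -> braided (fun _ _ => -1) f -> odd_endo f.
Proof.
move=> hK braided_f i w nz_c.
have := braided_f [:: (1, ([:: i], [:: i]))] (w, w).
rewrite tcoef_tmap tcoef_tau tcoef_tmap /tau /= !big_cons !big_nil /=.
rewrite !coef_pmul_pone !braid_coef_const !addr0 mul1r mulr1 expr1 mulN1r.
set c := coef (f i) w => square_eq.
have sign_eq : (-1 : K) ^+ (size w * size w) = -1.
  by apply: (mulIf (mulf_neq0 nz_c nz_c)); rewrite -square_eq mulN1r.
move: sign_eq; rewrite -signr_odd oddM andbb.
by case: (odd (size w)) => //= /eqP; rewrite expr0 eq_sym (negbTE (neg1_neq1 hK)).
Qed.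

(* G_odd is contained in Aut A_tau: the sign only depends on the parities of
   the lengths, which phi preserves at every nonzero coefficient. *)
Lemma odd_braided_sign (K : fieldType) (f : 'I_2 -> fpoly K) :
  odd_endo f -> braided (fun _ _ => -1) f.
Proof.
move=> odd_f t [x y].
rewrite tcoef_tmap tcoef_tau tcoef_tmap /tau big_map mulr_sumr.
apply: eq_bigr => -[a [u v]] _ /=; rewrite !braid_coef_const.
set cx := coef (pprod (map f v)) x; set cy := coef (pprod (map f u)) y.
have [->|nz_x] := eqVneq cx 0; first by rewrite !(mulr0, mul0r).
have [->|nz_y] := eqVneq cy 0; first by rewrite !(mulr0, mul0r).
rewrite -signr_odd oddM -[in RHS]signr_odd oddM.
rewrite (of_parity_word_image odd_f nz_x) (of_parity_word_image odd_f nz_y) andbC.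
by rewrite -mulrA [cy * cx]mulrC.
Qed.

Theorem lemma6 (K : fieldType) (hK : (2 \notin [pchar K])%N) :
  forall f : 'I_2 -> fpoly K,
    in_Aut_tau (fun _ _ => -1) f <-> in_G_odd f.
Proof.
move=> f; split=> -[aut_f cond_f]; split=> //.
  exact: braided_sign_odd hK cond_f.
exact: odd_braided_sign cond_f.
Qed.
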